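(* Let $G=(V,E,T,c)$ be a $k$-terminal network. For every $S\subset T$ with $S\neq\emptyset,T$ there exist $S_1,\dots,S_m\in\mathcal{T}_e(G)$ ($m\ge1$) such that the sets $E_{S_1},\dots,E_{S_m}$ are pairwise disjoint and $E_S=E_{S_1}\cup\dots\cup E_{S_m}$.
   Context: A $k$-terminal network $G=(V,E,T,c)$ is a finite connected undirected graph $(V,E)$ with edge weights (capacities) $c:E\to\mathbb{R}_{>0}$ and a set $T\subseteq V$ of $|T|=k$ terminals. For $F\subseteq E$ let $c(F)=\sum_{e\in F}c(e)$; for $W\subseteq V$ let $\delta(W)$ be the set of edges with exactly one endpoint in $W$. For $S\subset T$ with $S\neq\emptyset,T$, write $\bar S=T\setminus S$; a cut $(W,V\setminus W)$ is $S$-separating if $W\cap T\in\{S,\bar S\}$, and $\mathrm{mincut}_G(S)$ is the minimum of $c(\delta(W))$ over all $S$-separating cuts. It is assumed (e.g. by a generic perturbation of the weights) that the minimizing cutset is unique; it is denoted $E_S$ (so $E_S=E_{\bar S}$). For $F\subseteq E$, $CC(F)$ denotes the set of vertex sets of connected components of $(V,E\setminus F)$. The cutset $E_S$ is called elementary if $|CC(E_S)|=2$, and $\mathcal{T}_e(G)=\{S\subset T:\ S\neq\emptyset,T,\ |CC(E_S)|=2\}$. *)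

From HB Require Import structures.
From mathcomp Require Import all_boot all_order all_algebra.
Set Implicit Arguments. Unset Strict Implicit. Unset Printing Implicit Defensive.
Import Order.TTheory GRing.Theory Num.Theory.

(* A (multi)graph on a finite vertex type V with finite edge type E;
   edge e is undirected with endpoints ep1 e and ep2 e. *)
Section Network.
Variables (V E : finType) (ep1 ep2 : E -> V).

Definition adj (F : {set E}) : rel V :=
  fun x y => [exists e, (e \notin F) &&
     (((ep1 e == x) && (ep2 e == y)) || ((ep1 e == y) && (ep2 e == x)))].

Definition connected_graph : Prop := forall x y : V, connect (adj set0) x y.

Definition CC (F : {set E}) : {set {set V}} :=
  [set [set y | connect (adj F) x y] | x : V].

Definition delta (W : {set V}) : {set E} :=
  [set e | (ep1 e \in W) != (ep2 e \in W)].

Variable R : realFieldType.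
Variable c : E -> R.

Definition cap (F : {set E}) : R := (\sum_(e in F) c e)%R.

Variable T : {set V}.

Definition proper_terminal_subset (S : {set V}) : Prop :=
  [/\ S \subset T, S != set0 & S != T].

Definition separating (S W : {set V}) : bool :=
  (W :&: T == S) || (W :&: T == T :\: S).

Definition is_min_cutset (S : {set V}) (F : {set E}) : Prop :=
  exists2 W : {set V}, separating S W &
    F = delta W /\ (forall W' : {set V}, separating S W' -> (cap F <= cap (delta W'))%R).

(* uniqueness of minimizing cutsets (so E_S is well defined) *)
Definition unique_min_cutsets : Prop :=
  forall S, proper_terminal_subset S ->
    forall F F', is_min_cutset S F -> is_min_cutset S F' -> F = F'.

(* S \in T_e(G): E_S is elementary *)
Definition in_Te (S : {set V}) : Prop :=
  proper_terminal_subset S /\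
  exists2 F, is_min_cutset S F & #|CC F| = 2.

End Network.

From HB Require Import structures.
From mathcomp Require Import all_boot all_order all_algebra.
From mathcomp Require Import lra.
Import Order.TTheory GRing.Theory Num.Theory.
Set Implicit Arguments. Unset Strict Implicit. Unset Printing Implicit Defensive.

(* Every cut delta(X) of a connected graph is a disjoint union of bonds
   (cuts whose removal leaves exactly two components): a nonempty cut of
   minimum size inside delta(X) is a bond delta(Z), and delta(X Δ Z) =
   delta(X) \ delta(Z) is a smaller cut, so one peels bonds off inductively.
   If delta(W) is a minimum S-separating cut and delta(Z) is a bond inside it,
   then delta(Z) is a minimum (Z ∩ T)-separating cut: for any Y separating
   Z ∩ T, the set Y Δ W Δ Z separates S, and its cut has capacity at most
   c(delta Y) + c(delta W) - c(delta Z).  Positivity of the capacities makes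
   Z ∩ T a proper nonempty subset of T, since otherwise the empty cut would
   undercut delta(Z). *)

Definition symdiff (X : finType) (A B : {set X}) : {set X} :=
  [set x | (x \in A) != (x \in B)].

Section Graph.
Variables (V E : finType) (ep1 ep2 : E -> V).
Local Notation adj := (adj ep1 ep2).
Local Notation delta := (delta ep1 ep2).
Local Notation CC := (CC ep1 ep2).

Definition component (F : {set E}) (x : V) : {set V} := [set y | connect (adj F) x y].

Lemma adj_edge (F : {set E}) e : e \notin F -> adj F (ep1 e) (ep2 e).
Proof. by move=> eF; apply/existsP; exists e; rewrite eF !eqxx. Qed.

Lemma adj_sym (F : {set E}) : symmetric (adj F).
Proof. by move=> x y; apply/existsP/existsP => -[e]; exists e; rewrite orbC. Qed.

Lemma connect_adj_sym (F : {set E}) : connect_sym (adj F).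
Proof. exact/sym_connect_sym/adj_sym. Qed.

Lemma closed_adj (F : {set E}) (A : {set V}) :
  (forall e, e \notin F -> (ep1 e \in A) = (ep2 e \in A)) -> closed (adj F) A.
Proof.
move=> clA x y /existsP[e /andP[eF /orP[] /andP[/eqP<- /eqP<-]]];
  by rewrite (clA e eF).
Qed.

Lemma connect_delta_mem (Y : {set V}) u w :
  connect (adj (delta Y)) u w -> (u \in Y) = (w \in Y).
Proof. by apply: closed_connect; apply: closed_adj => e; rewrite inE negbK => /eqP. Qed.

Lemma mem_component (F : {set E}) x : x \in component F x.
Proof. by rewrite inE connect0. Qed.

Lemma component_eq (F : {set E}) x y : y \in component F x -> component F y = component F x.
Proof.
rewrite inE => cxy; apply/setP => z; rewrite !inE.
by rewrite (same_connect (connect_adj_sym F) cxy).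
Qed.

Lemma delta_component_sub (F : {set E}) x : delta (component F x) \subset F.
Proof.
apply/subsetP => e; rewrite !inE; apply: contraR => eF.
exact/eqP/(connect_closed (connect_adj_sym F) x (adj_edge eF)).
Qed.

Lemma delta_symdiff (A B : {set V}) :
  delta (symdiff A B) = symdiff (delta A) (delta B).
Proof.
apply/setP => e; rewrite !inE.
by case: (ep1 e \in A); case: (ep2 e \in A); case: (ep1 e \in B); case: (ep2 e \in B).
Qed.

Lemma delta_symdiff_sub (A B : {set V}) :
  delta B \subset delta A -> delta (symdiff A B) = delta A :\: delta B.
Proof.
move=> /subsetP sBA; rewrite delta_symdiff; apply/setP => e.
rewrite [e \in symdiff _ _]inE in_setD.
by case: (boolP (e \in delta B)) => [/sBA -> | _] //; case: (e \in delta A).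
Qed.

Section Connected.
Hypothesis connG : connected_graph ep1 ep2.

Lemma delta_neq0 (Y : {set V}) y w : y \in Y -> w \notin Y -> delta Y != set0.
Proof.
move=> yY wY; apply: contraNneq wY => Y0.
by rewrite -(connect_delta_mem (u := y)) // Y0; apply: connG.
Qed.

Lemma disjoint_delta_eq_setUT (A B : {set V}) a :
  [disjoint A & B] -> a \in A -> delta A = delta B -> A :|: B = setT.
Proof.
move=> /pred0P disjAB aA dAB; apply/setP => v; rewrite in_setT.
have closedAB : closed (adj set0) (A :|: B).
  apply: closed_adj => e _; have /setP/(_ e) := dAB.
  have := disjAB (ep1 e); have := disjAB (ep2 e); rewrite !inE /=.
  by case: (ep1 e \in A); case: (ep2 e \in A); case: (ep1 e \in B); case: (ep2 e \in B).
by rewrite -(closed_connect closedAB (connG a v)) inE aA.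
Qed.

Lemma card_CC_eq2 (F : {set E}) a b : ~~ connect (adj F) a b ->
  delta (component F a) = F -> delta (component F b) = F -> #|CC F| = 2.
Proof.
move=> nab dA dB; have disjAB : [disjoint component F a & component F b].
  apply/pred0P => v /=; rewrite !inE; apply: contraNF nab => /andP[av bv].
  by apply: connect_trans av _; rewrite connect_adj_sym.
have coverAB := disjoint_delta_eq_setUT disjAB (mem_component F a) (etrans dA (esym dB)).
have -> : CC F = [set component F a; component F b].
  rewrite -[CC F]/[set component F v | v : V]; apply/setP => K.
  apply/imsetP/set2P => [[v _ ->] | [->|->]]; last 2 first.
  - by exists a.
  - by exists b.
  have : v \in component F a :|: component F b by rewrite coverAB inE.
  by case/setUP => /component_eq ->; [left | right].
rewrite cards2; suff -> : component F a != component F b by [].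
apply: contraNneq nab => eqAB.
by move: (mem_component F b); rewrite -eqAB inE.
Qed.

Lemma card_CC_minimal_cut (Z : {set V}) : delta Z != set0 ->
  (forall Y, delta Y != set0 -> delta Y \subset delta Z -> #|delta Z| <= #|delta Y|) ->
  #|CC (delta Z)| = 2.
Proof.
move=> /set0Pn[e eZ] minZ; set F := delta Z.
have full u : e \in delta (component F u) -> delta (component F u) = F.
  move=> eu; apply/eqP; rewrite eqEcard delta_component_sub minZ ?delta_component_sub //.
  by apply/set0Pn; exists e.
have nab : ~~ connect (adj F) (ep1 e) (ep2 e).
  by apply/negP => /connect_delta_mem e12; move: eZ; rewrite inE e12 eqxx.
apply: (card_CC_eq2 nab); apply: full; rewrite inE !in_set connect0.
  by rewrite (negbTE nab).
by rewrite connect_adj_sym (negbTE nab).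
Qed.

Lemma exists_elementary_subcut (X : {set V}) : delta X != set0 ->
  exists2 Z, delta Z \subset delta X & delta Z != set0 /\ #|CC (delta Z)| = 2.
Proof.
move=> X0; pose P Y := (delta Y != set0) && (delta Y \subset delta X).
have PX : P X by rewrite /P X0 subxx.
case: (@arg_minnP _ X P (fun Y => #|delta Y|) PX) => Z /andP[Z0 ZX] minZ.
exists Z => //; split => //; apply: card_CC_minimal_cut => // Y Y0 YZ.
by apply: minZ; rewrite /P Y0 (subset_trans YZ ZX).
Qed.

Lemma elementary_cut_decomposition (X : {set V}) :
  exists Zs : seq {set V},
  [/\ {in Zs, forall Z, delta Z != set0 /\ #|CC (delta Z)| = 2},
      pairwise (fun Y Z => [disjoint delta Y & delta Z]) Zs &
      delta X = \bigcup_(Z <- Zs) delta Z].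
Proof.
move: {2}#|delta X| (leqnn #|delta X|) => n; elim: n X => [|n IHn] X.
  rewrite leqn0 cards_eq0 => /eqP X0; exists [::].
  by rewrite big_nil X0; split.
case: (eqVneq (delta X) set0) => [X0 _ | X0 Xn].
  by exists [::]; rewrite big_nil X0; split.
have [Z ZX [Z0 CCZ]] := exists_elementary_subcut X0.
have dXZ := delta_symdiff_sub ZX.
have [|Zs [elemZs disjZs unionZs]] := IHn (symdiff X Z).
  by rewrite dXZ cardsD (setIidPr ZX) leq_subLR (leq_trans Xn) // -add1n leq_add2r card_gt0.
exists (Z :: Zs); split.
- by move=> Y; rewrite inE => /predU1P[-> | /elemZs].
- rewrite /= disjZs andbT; apply/allP => Y YZs.
  have : delta Y \subset delta X :\: delta Z.
    by rewrite -dXZ unionZs bigcup_seq (bigcup_sup Y).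
  by rewrite subsetD disjoint_sym => /andP[].
- by rewrite big_cons -unionZs dXZ setDE setUIr setUCr setIT (setUidPr ZX).
Qed.

End Connected.
End Graph.

Section MinCuts.
Variables (V E : finType) (ep1 ep2 : E -> V) (R : realFieldType) (c : E -> R) (T : {set V}).
Hypothesis c_pos : forall e, (0 < c e)%R.
Local Notation delta := (delta ep1 ep2).
Local Notation cap := (cap c).
Local Notation separating := (separating T).
Local Notation is_min_cutset := (is_min_cutset ep1 ep2 c T).

Lemma cap_setD (F G : {set E}) : G \subset F -> cap F = (cap G + cap (F :\: G))%R.
Proof. by move=> GF; rewrite /cap (big_setID G) (setIidPr GF). Qed.

Lemma cap_ge0 (F : {set E}) : (0 <= cap F)%R.
Proof. by apply: sumr_ge0 => e _; apply: ltW. Qed.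

Lemma cap_gt0 (F : {set E}) : F != set0 -> (0 < cap F)%R.
Proof.
case/set0Pn => e eF; rewrite (cap_setD (_ : [set e] \subset F)) ?sub1set //.
by rewrite /cap big_set1 ltr_wpDr ?cap_ge0.
Qed.

Lemma cap_sub (F G : {set E}) : G \subset F -> (cap G <= cap F)%R.
Proof. by move=> GF; rewrite (cap_setD GF) lerDl cap_ge0. Qed.

Lemma cap_symdiff_le (A B : {set E}) : (cap (symdiff A B) <= cap A + cap B)%R.
Proof.
have sAB : symdiff A B \subset A :|: B.
  by apply/subsetP => x; rewrite !inE; case: (x \in A); case: (x \in B).
apply: le_trans (cap_sub sAB) _; rewrite (cap_setD (subsetUl A B)) lerD2l.
by apply: cap_sub; apply/subsetP => x; rewrite !inE; case: (x \in A).
Qed.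

Lemma separating_symdiff (S W Z Y : {set V}) : S \subset T -> separating S W ->
  separating (Z :&: T) Y -> separating S (symdiff Y (symdiff W Z)).
Proof.
move=> /subsetP ST /orP[] /eqP WT /orP[] /eqP YT; apply/orP;
  [left | right | right | left]; apply/eqP/setP => v;
  have /implyP STv := ST v; move: STv; move/setP/(_ v): WT; move/setP/(_ v): YT;
  rewrite !inE;
  by case: (v \in S); case: (v \in T); case: (v \in W); case: (v \in Y); case: (v \in Z).
Qed.

Lemma min_cutset_subcut (S W Z : {set V}) : S \subset T -> separating S W ->
  (forall W', separating S W' -> (cap (delta W) <= cap (delta W'))%R) ->
  delta Z \subset delta W -> is_min_cutset (Z :&: T) (delta Z).
Proof.
move=> ST sepW minW ZW; exists Z; first by rewrite /separating eqxx.
split=> // Y sepY.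
have := minW _ (separating_symdiff ST sepW sepY).
rewrite delta_symdiff (cap_setD ZW) -(delta_symdiff_sub ZW) => le_WZY.
have := cap_symdiff_le (delta Y) (delta (symdiff W Z)); lra.
Qed.

Lemma min_cutset_proper (S : {set V}) (F : {set E}) : S \subset T -> F != set0 ->
  is_min_cutset S F -> proper_terminal_subset T S.
Proof.
move=> ST F0 [W _ [FW minW]]; subst F.
have nsep0 : ~~ separating S set0.
  apply/negP => /minW; have -> : delta set0 = set0 by apply/setP => e; rewrite !inE.
  by rewrite {2}/cap big_set0 leNgt (cap_gt0 F0).
split=> //; apply: contraNneq nsep0 => ->.
  by rewrite /separating set0I eqxx.
by rewrite /separating set0I setDv eqxx orbT.
Qed.

Lemma separating_delta_neq0 (S W : {set V}) : connected_graph ep1 ep2 ->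
  proper_terminal_subset T S -> separating S W -> delta W != set0.
Proof.
move=> conn [ST /set0Pn[s sS] nST] sepW.
have [t tTS] : exists t, t \in T :\: S.
  by apply/set0Pn; rewrite setD_eq0; apply: contraNN nST => TS; rewrite eqEsubset ST.
have sT : s \in T := subsetP ST s sS.
have [tT tS] : t \in T /\ t \notin S by move: tTS; rewrite inE => /andP[].
have memW x : x \in T -> (x \in W) = (x \in W :&: T) by move=> xT; rewrite inE xT andbT.
case/orP: sepW => /eqP WT.
  by apply: (delta_neq0 conn (y := s) (w := t)); rewrite memW // WT ?inE ?tS ?sS ?tT.
by apply: (delta_neq0 conn (y := t) (w := s)); rewrite memW // WT !inE ?tS ?sS ?tT.
Qed.

End MinCuts.

Theorem theorem2p5 (V E : finType) (ep1 ep2 : E -> V)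
  (R : realFieldType) (c : E -> R) (T : {set V}) :
  connected_graph ep1 ep2 ->
  (forall e, (0 < c e)%R) ->
  unique_min_cutsets ep1 ep2 c T ->
  forall (S : {set V}) (ES : {set E}),
    proper_terminal_subset T S ->
    is_min_cutset ep1 ep2 c T S ES ->
    exists m : nat, exists (Ss : 'I_m -> {set V}) (Fs : 'I_m -> {set E}),
      [/\ (0 < m)%N,
          (forall i, in_Te ep1 ep2 c T (Ss i)),
          (forall i, is_min_cutset ep1 ep2 c T (Ss i) (Fs i)),
          (forall i j, i != j -> [disjoint Fs i & Fs j]) &
          ES = \bigcup_(i < m) Fs i].
Proof.
move=> conn c_pos _ S ES properS [W sepW [ES_W minW]]; subst ES.
have [ST _ _] := properS.
have [Zs [elemZs disjZs unionZs]] := elementary_cut_decomposition conn W.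
pose Z (i : 'I_(size Zs)) := nth set0 Zs i.
have ZZs i : Z i \in Zs by rewrite mem_nth.
have minZ i : is_min_cutset ep1 ep2 c T (Z i :&: T) (delta ep1 ep2 (Z i)).
  apply: (min_cutset_subcut c_pos ST sepW minW).
  by rewrite unionZs bigcup_seq (bigcup_sup (Z i)).
exists (size Zs), (fun i => Z i :&: T), (fun i => delta ep1 ep2 (Z i)); split=> //.
- rewrite lt0n size_eq0; apply: contraNneq (separating_delta_neq0 conn properS sepW).
  by rewrite unionZs => ->; rewrite big_nil.
- move=> i; have [Z0 CCZ] := elemZs _ (ZZs i); split; last by exists (delta ep1 ep2 (Z i)).
  by apply: (min_cutset_proper c_pos _ Z0 (minZ i)); rewrite subsetIr.
- move/(pairwiseP set0): disjZs => disjZs i j.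
  by rewrite neq_ltn => /orP[] ij; last rewrite disjoint_sym; apply: disjZs;
    rewrite ?inE /= ?ltn_ord.
- by rewrite unionZs (big_nth set0) big_mkord.
Qed.
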